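(* Let $f : \widehat{\mathbb{Z}} \to \widehat{\mathbb{Z}}$ be congruence preserving and $s \in \widehat{\mathbb{Z}}$. Then $\lambda_f$ is a period map of $f{\Uparrow}_s$.
   Context: $\mathbb{N} = \{1,2,\dots\}$, $\widehat{\mathbb{Z}} = \varprojlim_n \mathbb{Z}/n\mathbb{Z}$; $s \equiv_n t$ means $s-t\in n\widehat{\mathbb{Z}}$; $\widehat{\cdot}:\mathbb{N}\to\widehat{\mathbb{Z}}$ is the natural embedding. For continuous $g:\widehat{\mathbb{Z}}\to\widehat{\mathbb{Z}}$, a map $P:\mathbb{N}\to\mathbb{N}$ is a period map of $g$ if $s \equiv_{P(n)} t$ implies $g(s)\equiv_n g(t)$ for all $s,t,n$. A continuous $f$ is congruence preserving if the identity of $\mathbb{N}$ is a period map of $f$; then $f$ induces self-maps $f_n:\mathbb{Z}/n\mathbb{Z}\to\mathbb{Z}/n\mathbb{Z}$, and $\lambda_f(n)$ denotes the period of $f_n$, i.e. the least common multiple over $y \in \mathbb{Z}/n\mathbb{Z}$ of the cycle length of $y$ (the least $l \ge 1$ with $f_n^k(y) = f_n^{k+l}(y)$ for some $k \ge 0$). For such $f$ and $x \in \widehat{\mathbb{Z}}$, $f{\Uparrow}_x:\widehat{\mathbb{Z}}\to\widehat{\mathbb{Z}}$ is defined by $f{\Uparrow}_x(s) = \lim_{i\to\infty} f^{n_i}(x)$ for any sequence of positive integers $n_i \to +\infty$ in $\mathbb{R}$ with $\widehat{n_i}\to s$ in $\widehat{\mathbb{Z}}$ (this limit exists and is independent of the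 sequence for congruence preserving $f$). *)

From HB Require Import structures.
From mathcomp Require Import all_boot all_order all_algebra.
From mathcomp Require Import boolp.
From mathcomp Require Import ring.
Set Implicit Arguments. Unset Strict Implicit. Unset Printing Implicit Defensive.
Import Order.TTheory GRing.Theory Num.Theory.
Local Open Scope ring_scope.

Lemma modz_modz_dvd (m : int) (k d : int) :
  (d %| k)%Z -> ((m %% k)%Z %% d)%Z = (m %% d)%Z.
Proof.
move=> dk; apply/eqP; rewrite eqz_mod_dvd.
have -> : (m %% k)%Z - m = - ((m %/ k)%Z * k).
  by rewrite {2}(divz_eq m k) opprD addrCA subrr addr0.
by rewrite rpredN dvdz_mull.
Qed.

(* An element of Zhat = lim_n Z/nZ is a compatible family of canonical
   residues: [zv x k] is the residue of x modulo k.+1, in [0, k]. *)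
Record Zhat := MkZhat {
  zv : nat -> int;
  zv_compat : forall d k : nat, (d.+1 %| k.+1)%N -> (zv k %% d.+1)%Z = zv d
}.

Lemma zhat_eq (x y : Zhat) : zv x =1 zv y -> x = y.
Proof.
case: x y => [x px] [y py] /= /boolp.funext exy; subst y.
by rewrite (Prop_irrelevance px py).
Qed.

Definition zhat_of_nat_fun (m : nat) : nat -> int := fun k => ((m%:Z) %% k.+1)%Z.
Lemma zhat_of_nat_compat (m : nat) d k : (d.+1 %| k.+1)%N ->
  (zhat_of_nat_fun m k %% d.+1)%Z = zhat_of_nat_fun m d.
Proof. by move=> dk; rewrite /zhat_of_nat_fun modz_modz_dvd // dvdz_nat. Qed.
Definition zhat_of_nat (m : nat) : Zhat := MkZhat (@zhat_of_nat_compat m).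

Definition zsub_fun (x y : Zhat) : nat -> int := fun k => ((zv x k - zv y k) %% k.+1)%Z.
Lemma zsub_compat (x y : Zhat) d k : (d.+1 %| k.+1)%N ->
  (zsub_fun x y k %% d.+1)%Z = zsub_fun x y d.
Proof.
move=> dk; rewrite /zsub_fun modz_modz_dvd ?dvdz_nat //.
rewrite -(zv_compat x dk) -(zv_compat y dk).
apply/eqP; rewrite eqz_mod_dvd.
have -> : zv x k - zv y k - ((zv x k %% d.+1)%Z - (zv y k %% d.+1)%Z) =
  (zv x k - (zv x k %% d.+1)%Z) - (zv y k - (zv y k %% d.+1)%Z).
  by ring.
by rewrite rpredB // -eqz_mod_dvd modz_mod.
Qed.
Definition zsub (x y : Zhat) : Zhat := MkZhat (@zsub_compat x y).

Definition zscale_fun (n : nat) (x : Zhat) : nat -> int :=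
  fun k => ((n%:Z * zv x k) %% k.+1)%Z.
Lemma zscale_compat n (x : Zhat) d k : (d.+1 %| k.+1)%N ->
  (zscale_fun n x k %% d.+1)%Z = zscale_fun n x d.
Proof.
move=> dk; rewrite /zscale_fun modz_modz_dvd ?dvdz_nat //.
by rewrite -(zv_compat x dk) modzMmr.
Qed.
Definition zscale (n : nat) (x : Zhat) : Zhat := MkZhat (@zscale_compat n x).

Definition zcongr (n : nat) (s t : Zhat) : Prop := exists u : Zhat, zsub s t = zscale n u.

(* continuity of g : Zhat -> Zhat for the profinite topology
   (basic neighbourhoods of s are s + m Zhat, m >= 1) *)
Definition zcontinuous (g : Zhat -> Zhat) : Prop :=
  forall (s : Zhat) (n : nat), (0 < n)%N ->
    exists2 m : nat, (0 < m)%N & forall t : Zhat, zcongr m t s -> zcongr n (g t) (g s).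

Definition is_period_map (g : Zhat -> Zhat) (P : nat -> nat) : Prop :=
  forall (n : nat), (0 < n)%N -> forall s t : Zhat, zcongr (P n) s t -> zcongr n (g s) (g t).

Definition congruence_preserving (f : Zhat -> Zhat) : Prop :=
  zcontinuous f /\ is_period_map f id.

(* the induced map f_n on Z/nZ = {0, ..., n-1}: y |-> (f (hat y)) mod n *)
Definition fmod (f : Zhat -> Zhat) (n : nat) (y : nat) : nat :=
  `|zv (f (zhat_of_nat y)) n.-1|%N.

Definition is_cycle_step (f : Zhat -> Zhat) (n y l : nat) : bool :=
  (0 < l)%N && `[< exists k : nat, iter k (fmod f n) y = iter (k + l) (fmod f n) y >].

Definition cycle_len (f : Zhat -> Zhat) (n y : nat) : nat :=
  match pselect (exists l, is_cycle_step f n y l) with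
  | left h => ex_minn h
  | right _ => 0%N
  end.

Definition lambda (f : Zhat -> Zhat) (n : nat) : nat :=
  \big[lcmn/1%N]_(y < n) cycle_len f n y.

Definition nat_to_infty (u : nat -> nat) : Prop :=
  forall M : nat, exists i0, forall i, (i0 <= i)%N -> (M <= u i)%N.
Definition zconverges (u : nat -> Zhat) (v : Zhat) : Prop :=
  forall m : nat, (0 < m)%N -> exists i0, forall i, (i0 <= i)%N -> zcongr m (u i) v.

Definition is_uparrow (f : Zhat -> Zhat) (x : Zhat) (g : Zhat -> Zhat) : Prop :=
  forall (s : Zhat) (n : nat -> nat),
    (forall i, (0 < n i)%N) -> nat_to_infty n ->
    zconverges (fun i => zhat_of_nat (n i)) s ->
    zconverges (fun i => iter (n i) f x) (g s).

(* For t in Zhat, the positive integers [zapprox t i] tend to infinity and agree with t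
   modulo (i+1)!, so g t is the limit of f^(zapprox t i)(s).  Since f is congruence
   preserving, reduction modulo n turns f^a(s) into f_n^a(s mod n), and the orbit of
   s mod n under f_n is eventually periodic with a period dividing lambda_f(n).  If
   t1 = t2 modulo lambda_f(n), then for large i the exponents zapprox t1 i and
   zapprox t2 i are large and congruent modulo that period, so the two iterates agree
   modulo n, and so do their limits g t1 and g t2. *)

From mathcomp Require Import all_boot all_algebra boolp zify.
Set Implicit Arguments. Unset Strict Implicit. Unset Printing Implicit Defensive.
Import GRing.Theory Num.Theory.
Local Open Scope ring_scope.

Lemma zv_mod (x : Zhat) k : (zv x k %% k.+1)%Z = zv x k.
Proof. exact: zv_compat (dvdnn _). Qed.

Lemma zv_ge0 (x : Zhat) k : 0 <= zv x k.
Proof. by rewrite -zv_mod modz_ge0. Qed.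

Lemma zv_lt (x : Zhat) k : zv x k < k.+1%:Z.
Proof. by rewrite -zv_mod ltz_pmod. Qed.

Lemma zv_zhat_of_nat m k : zv (zhat_of_nat m) k = (m %% k.+1)%N.
Proof. by rewrite /= /zhat_of_nat_fun modz_nat. Qed.

Section ExactQuotient.
Variables (n : nat) (d : Zhat).

(* The residue of [d] modulo [(n+1)(k+1)], divided by [n+1], is the quotient modulo [k+1]. *)
Let lift k := (n.+1 * k.+1).-1.

Lemma liftS k : (lift k).+1 = (n.+1 * k.+1)%N.
Proof. by rewrite /lift prednK // muln_gt0. Qed.

Definition zquot_fun k : int := ((zv d (lift k) %/ n.+1)%Z %% k.+1)%Z.

Lemma zquot_compat j k : (j.+1 %| k.+1)%N -> (zquot_fun k %% j.+1)%Z = zquot_fun j.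
Proof.
move=> jk; rewrite /zquot_fun modz_modz_dvd ?dvdz_nat //.
have lift_dvd : ((lift j).+1 %| (lift k).+1)%N by rewrite !liftS dvdn_pmul2l.
have n_dvd i : (n.+1 %| (lift i).+1)%N by rewrite liftS dvdn_mulr.
apply/eqP; rewrite eqz_mod_dvd -(dvdz_mul2r (p := n.+1%:Z)) //.
have quotE i : (zv d (lift i) %/ n.+1)%Z * n.+1 = zv d (lift i) - zv d n.
  by rewrite {2}(divz_eq (zv d (lift i)) n.+1) (zv_compat d (n_dvd i)) addrK.
rewrite mulrBl !quotE opprB addrA subrK -PoszM (mulnC j.+1) -liftS.
have : (zv d (lift k) == zv d (lift j) %[mod (lift j).+1])%Z.
  by rewrite (zv_compat d lift_dvd) zv_mod.
by rewrite eqz_mod_dvd.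
Qed.

Definition zquot : Zhat := MkZhat zquot_compat.

Lemma zscale_zquot : zv d n = 0 -> zscale n.+1 zquot = d.
Proof.
move=> d0; apply: zhat_eq => k /=; rewrite /zscale_fun /zquot_fun modzMmr.
have n_dvd : (n.+1 %| (lift k).+1)%N by rewrite liftS dvdn_mulr.
have k_dvd : (k.+1 %| (lift k).+1)%N by rewrite liftS dvdn_mull.
rewrite mulrC divzK ?(zv_compat d k_dvd) //.
by apply/dvdz_mod0P; rewrite (zv_compat d n_dvd).
Qed.

End ExactQuotient.

Lemma zcongrS_zv n (s t : Zhat) : zcongr n.+1 s t <-> zv s n = zv t n.
Proof.
split.
  case=> u /(congr1 (fun x => zv x n)) /=.
  rewrite /zsub_fun /zscale_fun modzMr.
  by move/dvdz_mod0P; rewrite -eqz_mod_dvd !zv_mod => /eqP.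
move=> st; exists (zquot n (zsub s t)); rewrite zscale_zquot //=.
by rewrite /zsub_fun st subrr.
Qed.

Definition zres (x : Zhat) (n : nat) : nat := `|zv x n|%N.

Lemma zres_int (x : Zhat) n : (zres x n)%:Z = zv x n.
Proof. by rewrite /zres gez0_abs ?zv_ge0. Qed.

Lemma zres_lt (x : Zhat) n : (zres x n < n.+1)%N.
Proof. by rewrite -ltz_nat zres_int zv_lt. Qed.

Lemma zres_zhat_of_nat m n : zres (zhat_of_nat m) n = (m %% n.+1)%N.
Proof. by rewrite /zres zv_zhat_of_nat absz_nat. Qed.

Lemma zres_compat (x : Zhat) d k : (d.+1 %| k.+1)%N -> (zres x k %% d.+1)%N = zres x d.
Proof. by move=> dk; apply/eqP; rewrite -eqz_nat -modz_nat !zres_int zv_compat. Qed.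

Lemma zcongrS_zres n (s t : Zhat) : zcongr n.+1 s t <-> zres s n = zres t n.
Proof.
rewrite zcongrS_zv; split=> [st | st]; first by rewrite /zres st.
by rewrite -!zres_int st.
Qed.

Local Open Scope nat_scope.

Section Iteration.
Variables (F : nat -> nat) (r : nat).

Lemma iter_cycle_bounded n : (forall y, F y < n) -> r < n ->
  exists k l, 0 < l /\ iter k F r = iter (k + l) F r.
Proof.
move=> ltF ltr; have lt_iter i : iter i F r < n by case: i => [|i] /=.
have [|no_cycle] := pselect (exists k l, 0 < l /\ iter k F r = iter (k + l) F r); first by [].
pose g (i : 'I_n.+1) := Ordinal (lt_iter i).
suff /leq_card : injective g by rewrite !card_ord ltnn.
move=> x y /(congr1 val) /= eq_xy; apply/val_inj => /=.
case: (ltngtP x y) => // [lt_xy | lt_yx]; case: no_cycle.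
  by exists x, (y - x); rewrite subn_gt0 subnKC ?(ltnW lt_xy).
by exists y, (x - y); rewrite subn_gt0 subnKC ?(ltnW lt_yx).
Qed.

Variables (k c : nat).
Hypothesis cycle_kc : iter k F r = iter (k + c) F r.

Lemma iter_add_cycle m : k <= m -> iter (m + c) F r = iter m F r.
Proof. by move=> le_km; rewrite -(subnK le_km) -addnA !(iterD (m - k)) -cycle_kc. Qed.

Lemma iter_add_mul_cycle m N : k <= m -> iter (m + N * c) F r = iter m F r.
Proof.
move=> le_km; elim: N => [|N IH]; first by rewrite addn0.
by rewrite mulSn addnCA addnC iter_add_cycle // (leq_trans le_km (leq_addr _ _)).
Qed.

Lemma iter_eq_mod_cycle a b : k <= a -> k <= b -> a = b %[mod c] ->
  iter a F r = iter b F r.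
Proof.
wlog le_ab : a b / a <= b => [W|le_ka le_kb].
  by case: (leqP a b) => [|/ltnW] le; [exact: W | move=> ? ? /esym ?; symmetry; exact: W].
move=> /eqP; rewrite eq_sym eqn_mod_dvd // => /dvdnP [N eN].
by rewrite -(subnKC le_ab) eN iter_add_mul_cycle.
Qed.

End Iteration.

Section InducedMap.
Variable f : Zhat -> Zhat.

Lemma cycle_len_step n r : r < n.+1 -> is_cycle_step f n.+1 r (cycle_len f n.+1 r).
Proof.
move=> lt_rn; rewrite /cycle_len; case: pselect => [ex_step | no_step].
  by case: (ex_minnP ex_step).
have [k [l [l_gt0 cycle_kl]]] := iter_cycle_bounded (fun y => zres_lt (f (zhat_of_nat y)) n) lt_rn.
by case: no_step; exists l; rewrite /is_cycle_step l_gt0; apply/asboolP; exists k.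
Qed.

Lemma lambda_gt0 n : 0 < lambda f n.+1.
Proof.
apply: (big_ind (fun m => 0 < m)) => // [a b a_gt0 b_gt0 | y _].
  by rewrite lcmn_gt0 a_gt0 b_gt0.
by case/andP: (cycle_len_step (ltn_ord y)).
Qed.

Lemma cycle_len_dvd_lambda n r : r < n.+1 -> cycle_len f n.+1 r %| lambda f n.+1.
Proof. by move=> lt_rn; apply: (biglcmn_sup (Ordinal lt_rn)). Qed.

Hypothesis f_cp : is_period_map f id.

Lemma zres_fmod n (y : Zhat) : zres (f y) n = fmod f n.+1 (zres y n).
Proof.
apply/zcongrS_zres/f_cp => //; apply/zcongrS_zres.
by rewrite zres_zhat_of_nat modn_small ?zres_lt.
Qed.

Lemma zres_iter_fmod n (x : Zhat) a : zres (iter a f x) n = iter a (fmod f n.+1) (zres x n).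
Proof. by elim: a => //= a IH; rewrite zres_fmod IH. Qed.

End InducedMap.

Definition zapprox (x : Zhat) (i : nat) : nat := zres x (i.+1`!).-1 + i.+1`!.

Lemma zres_zapprox (x : Zhat) m i : m <= i -> zres (zhat_of_nat (zapprox x i)) m = zres x m.
Proof.
move=> le_mi; have dvd_fact : m.+1 %| i.+1`! by apply: dvdn_fact; rewrite ltnS.
rewrite zres_zhat_of_nat -modnDmr (eqP dvd_fact) addn0.
have dvd_pred : m.+1 %| (i.+1`!).-1.+1 by rewrite prednK ?fact_gt0.
by rewrite zres_compat.
Qed.

Lemma zapprox_gt (x : Zhat) i : i < zapprox x i.
Proof. by rewrite (leq_trans (fact_geq _)) ?leq_addl. Qed.

Lemma zapprox_converges (x : Zhat) : zconverges (fun i => zhat_of_nat (zapprox x i)) x.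
Proof.
move=> [//|m] _; exists m => i le_mi.
by apply/zcongrS_zres; rewrite zres_zapprox.
Qed.

Lemma uparrow_zapprox (f : Zhat -> Zhat) (x : Zhat) (g : Zhat -> Zhat) (s : Zhat) :
  is_uparrow f x g -> zconverges (fun i => iter (zapprox s i) f x) (g s).
Proof.
apply; last exact: zapprox_converges.
  by move=> i; apply: leq_ltn_trans (zapprox_gt s i).
by move=> M; exists M => i le_Mi; rewrite ltnW // (leq_ltn_trans le_Mi) ?zapprox_gt.
Qed.

Theorem proposition3p9 (f : Zhat -> Zhat) (s : Zhat) (g : Zhat -> Zhat) :
  congruence_preserving f -> is_uparrow f s g -> is_period_map g (lambda f).
Proof.
move=> [_ f_cp] f_up [//|n] _ t1 t2.
have lambda_pos := lambda_gt0 f n; rewrite -(prednK lambda_pos) zcongrS_zres => t12.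
have /andP[_ /asboolP[k cycle_k]] := cycle_len_step f (zres_lt s n).
have [i1 conv1] := uparrow_zapprox t1 f_up (ltn0Sn n).
have [i2 conv2] := uparrow_zapprox t2 f_up (ltn0Sn n).
pose i := maxn (maxn i1 i2) (maxn (lambda f n.+1).-1 k).
have [le_i1 le_i2] : i1 <= i /\ i2 <= i by rewrite /i; split; lia.
have [le_lambda le_k] : (lambda f n.+1).-1 <= i /\ k <= i by rewrite /i; split; lia.
apply/zcongrS_zres.
have /zcongrS_zres <- := conv1 i le_i1; have /zcongrS_zres <- := conv2 i le_i2.
rewrite !zres_iter_fmod //.
have le_k_approx t : k <= zapprox t i := leq_trans le_k (ltnW (zapprox_gt t i)).
apply: (iter_eq_mod_cycle cycle_k (le_k_approx t1) (le_k_approx t2)).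
have dvd_lambda := cycle_len_dvd_lambda f (zres_lt s n).
rewrite -(modn_dvdm (zapprox t1 i) dvd_lambda) -(modn_dvdm (zapprox t2 i) dvd_lambda).
by rewrite -(prednK lambda_pos) -!zres_zhat_of_nat !zres_zapprox ?t12.
Qed.
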